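(* Let $A, C, D$ be binary random variables, with $A$ taking values $a,\overline{a}$, $C$ taking values $c,\overline{c}$, $D$ taking values $d,\overline{d}$, and let $Y$ be a real random variable with finite expectation. Suppose the joint distribution factorizes as \[ p(A,C,D,Y)=p(D)\,p(C\mid D)\,p(A\mid C)\,p(Y\mid A,C) \] (i.e. $D$ causes $C$, $C$ is a common cause of $A$ and $Y$, and $A$ causes $Y$). Assume that $C$ and $D$ are dependent, and that every event $\{A=x, C=y, D=z\}$ has positive probability. If $E[Y\mid A,D]$ is monotone in $D$, then $E[Y\mid A,C]$ is monotone in $C$.
   Context: $E[Y\mid A,D]$ is called nondecreasing in $D$ if $E[Y\mid a,d]\ge E[Y\mid a,\overline{d}]$ and $E[Y\mid \overline{a},d]\ge E[Y\mid \overline{a},\overline{d}]$; nonincreasing in $D$ if both inequalities are reversed; monotone in $D$ if it is nondecreasing or nonincreasing. The same definitions apply with $C$ in place of $D$. *)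

From mathcomp Require Import all_boot all_algebra.
From mathcomp Require Import all_classical all_reals all_analysis.
Set Implicit Arguments. Unset Strict Implicit. Unset Printing Implicit Defensive.
Import GRing.Theory Num.Theory.
Local Open Scope classical_set_scope.
Local Open Scope ring_scope.

Section Defs.
Context (d : measure_display) (T : measurableType d) (R : realType)
        (P : probability T R).

Definition ev (X : T -> bool) (b : bool) : set T := [set w | X w = b].

Definition pr (S : set T) : R := fine (P S).

Definition cprob (S U : set T) : R := pr (S `&` U) / pr U.

Definition condE (Y : T -> R) (U : set T) : R :=
  fine (\int[P]_(w in U) (Y w)%:E) / pr U.

(* E[Y | A, D] is nondecreasing in D (true = a, d ; false = abar, dbar) *)
Definition nondecr_in (Y : T -> R) (A D : T -> bool) : Prop :=
  condE Y (ev A true `&` ev D true) >= condE Y (ev A true `&` ev D false) /\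
  condE Y (ev A false `&` ev D true) >= condE Y (ev A false `&` ev D false).

Definition nonincr_in (Y : T -> R) (A D : T -> bool) : Prop :=
  condE Y (ev A true `&` ev D true) <= condE Y (ev A true `&` ev D false) /\
  condE Y (ev A false `&` ev D true) <= condE Y (ev A false `&` ev D false).

Definition monotone_in (Y : T -> R) (A D : T -> bool) : Prop :=
  nondecr_in Y A D \/ nonincr_in Y A D.

End Defs.

(* Under the factorization, Y is independent of D given (A, C), so
   E[Y | A = x, D = z] is the average of E[Y | x, c] and E[Y | x, cbar] with
   weights P(C = y, D = z) P(A = x | C = y).  Hence the D-contrast
   E[Y | x, d] - E[Y | x, dbar] is the C-contrast E[Y | x, c] - E[Y | x, cbar]
   times a factor whose sign is that of the determinant
   P(c, d) P(cbar, dbar) - P(c, dbar) P(cbar, d) of the joint table of C and D,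
   for x = a and x = abar alike.  Dependence of C and D makes this determinant
   nonzero, so the two D-contrasts share a sign iff the two C-contrasts do. *)

From mathcomp Require Import all_boot all_algebra.
From mathcomp Require Import all_classical all_reals all_analysis.
From mathcomp Require Import order measurable_realfun.
From mathcomp Require Import ring lra.
Import Order.TTheory GRing.Theory Num.Theory.
Local Open Scope classical_set_scope.
Local Open Scope ring_scope.

Section SignAlgebra.
Context {R : realFieldType}.

Definition same_sign (u v : R) := (0 <= u /\ 0 <= v) \/ (u <= 0 /\ v <= 0).

Definition wavg (p q u v : R) := (p * u + q * v) / (p + q).

Lemma wavg_diff (p q p' q' u v : R) : p + q != 0 -> p' + q' != 0 ->
  wavg p q u v - wavg p' q' u v =
    (u - v) * ((p * q' - q * p') / ((p + q) * (p' + q'))).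
Proof. by move=> pq_neq0 pq'_neq0; rewrite /wavg; field; rewrite pq_neq0 pq'_neq0. Qed.

Lemma same_sign_mul (u1 u2 s1 s2 m : R) : 0 < s1 -> 0 < s2 -> m != 0 ->
  same_sign (u1 * (s1 * m)) (u2 * (s2 * m)) -> same_sign u1 u2.
Proof.
move=> s1_gt0 s2_gt0; case: ltrgt0P => // m_sgn _.
- have w1_gt0 : 0 < s1 * m by rewrite pmulr_rgt0.
  have w2_gt0 : 0 < s2 * m by rewrite pmulr_rgt0.
  by rewrite /same_sign !pmulr_lge0 // !pmulr_lle0.
- have w1_lt0 : s1 * m < 0 by rewrite pmulr_rlt0.
  have w2_lt0 : s2 * m < 0 by rewrite pmulr_rlt0.
  by rewrite /same_sign !nmulr_lge0 // !nmulr_lle0 //; tauto.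
Qed.

Lemma det0_prod_marginals (c : bool -> bool -> R) :
  c true true + c true false + (c false true + c false false) = 1 ->
  c true true * c false false = c true false * c false true ->
  forall y z, c y z = (c y true + c y false) * (c true z + c false z).
Proof. by move=> sum1 det0 [] []; nra. Qed.

End SignAlgebra.

Section Probability.
Context {d} {T : measurableType d} {R : realType} (P : probability T R).

Lemma prE (S : set T) : measurable S -> P S = (pr P S)%:E.
Proof. by move=> mS; rewrite /pr fineK // fin_num_measure. Qed.

Lemma pr_gt0_subset (S U : set T) : measurable S -> measurable U -> S `<=` U ->
  (0 < P S)%E -> 0 < pr P U.
Proof.
move=> mS mU SU PS_gt0; rewrite -lte_fin -prE //.
by apply: (lt_le_trans PS_gt0); apply: le_measure; rewrite ?inE.
Qed.

Lemma setI_evU (U : set T) (X : T -> bool) :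
  U = (U `&` ev X true) `|` (U `&` ev X false).
Proof.
apply/seteqP; split => [w Uw|w [] [] //].
by rewrite /ev /=; case: (X w); [left|right].
Qed.

Lemma setI_ev_disj (U V : set T) (X : T -> bool) :
  (U `&` ev X true) `&` (V `&` ev X false) = set0.
Proof. by apply/seteqP; split => // w [[_ Xt] [_]]; rewrite /ev /= Xt. Qed.

Lemma pr_split {X : T -> bool} (mX : forall b, measurable (ev X b)) {U : set T} :
  measurable U ->
  pr P U = pr P (U `&` ev X true) + pr P (U `&` ev X false).
Proof.
move=> mU; have mUX b : measurable (U `&` ev X b) := measurableI _ _ mU (mX b).
apply: EFin_inj; rewrite EFinD -!prE // {1}(setI_evU U X).
by rewrite measureU // setI_ev_disj.
Qed.

Lemma ge0_integral_mrestr {S : set T} (mS : measurable S) (h : T -> \bar R) :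
  measurable_fun setT h -> (forall x, (0 <= h x)%E) ->
  (\int[P]_(x in S) h x = \int[mrestr P mS]_x h x)%E.
Proof.
move=> mh h0.
rewrite (@ge0_negligible_integral _ _ _ (mrestr P mS) setT (~` S)) //; last 2 first.
- exact: measurableC.
- by change (P (~` S `&` S) = 0); rewrite setICl measure0.
rewrite setTD setCK; apply: eq_measure_integral => A mA AS.
by change (P A = P (A `&` S)); rewrite setIidl.
Qed.

Section IntegrableVariable.
Context {Y : T -> R} (mY : measurable_fun setT Y)
  (iY : P.-integrable setT (EFin \o Y)).

Lemma ge0_integral_scale_law {S1 S2 : set T} (mS1 : measurable S1)
    (mS2 : measurable S2) {k : {nonneg R}} {g : R -> \bar R} :
  measurable_fun setT g -> (forall r, (0 <= g r)%E) ->
  (forall B, measurable B ->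
    P (Y @^-1` B `&` S1) = (k%:num%:E * P (Y @^-1` B `&` S2))%E) ->
  (\int[P]_(x in S1) g (Y x) = k%:num%:E * \int[P]_(x in S2) g (Y x))%E.
Proof.
move=> mg g0 lawY.
have mgY : measurable_fun setT (g \o Y) by exact: measurableT_comp.
have gY0 x : (0 <= (g \o Y) x)%E := g0 (Y x).
rewrite (ge0_integral_mrestr mS1 _ mgY gY0) (ge0_integral_mrestr mS2 _ mgY gY0).
have push S (mS : measurable S) : (\int[mrestr P mS]_x g (Y x) =
    \int[pushforward (mrestr P mS) Y]_y g y)%E.
  by rewrite ge0_integral_pushforward ?preimage_setT.
rewrite !push -ge0_integral_mscale //.
by apply: eq_measure_integral => B mB _; exact: lawY.
Qed.

Lemma integral_scale_law {S1 S2 : set T} (k : R) :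
  measurable S1 -> measurable S2 -> 0 <= k ->
  (forall B, measurable B ->
    pr P (Y @^-1` B `&` S1) = k * pr P (Y @^-1` B `&` S2)) ->
  fine (\int[P]_(x in S1) (Y x)%:E) = k * fine (\int[P]_(x in S2) (Y x)%:E).
Proof.
move=> mS1 mS2 k_ge0 lawY.
have lawYE B : measurable B -> P (Y @^-1` B `&` S1) =
    ((NngNum k_ge0)%:num%:E * P (Y @^-1` B `&` S2))%E.
  move=> mB; have mYB : measurable (Y @^-1` B).
    by rewrite -[X in measurable X]setTI; exact: mY.
  by rewrite !prE ?lawY ?EFinM //; exact: measurableI.
have mEFin : measurable_fun setT (@EFin R) by exact: EFin_measurable.
have epos S : (\int[P]_(x in S) (EFin \o Y)^\+ x = \int[P]_(x in S) EFin^\+ (Y x))%E.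
  by apply: eq_integral => x _; rewrite !funeposE.
have eneg S : (\int[P]_(x in S) (EFin \o Y)^\- x = \int[P]_(x in S) EFin^\- (Y x))%E.
  by apply: eq_integral => x _; rewrite !funenegE.
have iY2 : P.-integrable S2 (EFin \o Y) by exact: integrableS iY.
have := integrable_pos_fin_num mS2 iY2; rewrite epos => fin_pos.
have := integrable_neg_fin_num mS2 iY2; rewrite eneg => fin_neg.
rewrite !(integralE _ _ (EFin \o Y)) !epos !eneg.
rewrite (ge0_integral_scale_law mS1 mS2 (measurable_funepos mEFin) (funepos_ge0 _) lawYE).
rewrite (ge0_integral_scale_law mS1 mS2 (measurable_funeneg mEFin) (funeneg_ge0 _) lawYE).
rewrite -(fineK fin_pos) -(fineK fin_neg).
by rewrite -!EFinM -!EFinB /= mulrBr.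
Qed.

Lemma condE_eq_of_law {S1 S2 : set T} : measurable S1 -> measurable S2 ->
  0 < pr P S1 -> 0 < pr P S2 ->
  (forall B, measurable B -> cprob P (Y @^-1` B) S1 = cprob P (Y @^-1` B) S2) ->
  condE P Y S1 = condE P Y S2.
Proof.
move=> mS1 mS2 pS1_gt0 pS2_gt0 lawY.
have pS1_neq0 := lt0r_neq0 pS1_gt0; have pS2_neq0 := lt0r_neq0 pS2_gt0.
rewrite /condE (integral_scale_law (pr P S1 / pr P S2) mS1 mS2) //; last first.
- move=> B mB; rewrite mulrAC -mulrA -[_ / pr P S2]/(cprob P _ S2) -lawY //.
  by rewrite /cprob mulrC divfK.
- by rewrite divr_ge0 ?ltW.
by field; rewrite pS1_neq0 pS2_neq0.
Qed.

Lemma integral_split {X : T -> bool} (mX : forall b, measurable (ev X b))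
    {U : set T} : measurable U ->
  fine (\int[P]_(w in U) (Y w)%:E) =
    fine (\int[P]_(w in U `&` ev X true) (Y w)%:E) +
    fine (\int[P]_(w in U `&` ev X false) (Y w)%:E).
Proof.
move=> mU; have mUX b : measurable (U `&` ev X b) := measurableI _ _ mU (mX b).
have fin_int b : (\int[P]_(w in U `&` ev X b) (Y w)%:E)%E \is a fin_num.
  by apply: integrable_fin_num => //; exact: integrableS iY.
rewrite {1}(setI_evU U X) integral_setU //; first by rewrite fineD.
- by apply: measurable_funTS; apply/measurable_EFinP.
- by apply/disj_set2P; rewrite setI_ev_disj.
Qed.

Lemma condE_wavg {X : T -> bool} (mX : forall b, measurable (ev X b))
    {U : set T} : measurable U ->
  0 < pr P (U `&` ev X true) -> 0 < pr P (U `&` ev X false) ->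
  condE P Y U = wavg (pr P (U `&` ev X true)) (pr P (U `&` ev X false))
    (condE P Y (U `&` ev X true)) (condE P Y (U `&` ev X false)).
Proof.
move=> mU pt_gt0 pf_gt0.
rewrite /condE /wavg (integral_split mX mU) (pr_split mX mU).
by rewrite !(mulrC (pr P _)) !divfK // gt_eqF.
Qed.

End IntegrableVariable.

Definition joint_det (X Z : T -> bool) : R :=
  pr P (ev X true `&` ev Z true) * pr P (ev X false `&` ev Z false) -
  pr P (ev X true `&` ev Z false) * pr P (ev X false `&` ev Z true).

Lemma joint_det_eq0_indep {X Z : T -> bool} :
  (forall b, measurable (ev X b)) -> (forall b, measurable (ev Z b)) ->
  joint_det X Z = 0 ->
  forall y z, pr P (ev X y `&` ev Z z) = pr P (ev X y) * pr P (ev Z z).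
Proof.
move=> mX mZ /eqP; rewrite subr_eq0 => /eqP det0 y z.
have prX b : pr P (ev X b) = pr P (ev X b `&` ev Z true) + pr P (ev X b `&` ev Z false).
  exact: pr_split.
have prZ b : pr P (ev Z b) = pr P (ev X true `&` ev Z b) + pr P (ev X false `&` ev Z b).
  by rewrite (pr_split mX (mZ b)) !(setIC (ev Z b)).
have total : pr P (ev X true) + pr P (ev X false) = 1.
  have := pr_split mX measurableT; rewrite !setTI => <-.
  by rewrite /pr probability_setT.
rewrite (det0_prod_marginals (fun y z => pr P (ev X y `&` ev Z z))) /=.
- by rewrite -prX -prZ.
- by rewrite -!prX.
- exact: det0.
Qed.

Lemma monotone_inE (Y : T -> R) (A X : T -> bool) :
  monotone_in P Y A X <->
  same_sign
    (condE P Y (ev A true `&` ev X true) - condE P Y (ev A true `&` ev X false))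
    (condE P Y (ev A false `&` ev X true) - condE P Y (ev A false `&` ev X false)).
Proof. by rewrite /monotone_in /nondecr_in /nonincr_in /same_sign !subr_ge0 !subr_le0. Qed.

End Probability.

Section CommonCauseModel.
Context {d} {T : measurableType d} {R : realType} {P : probability T R}.
Context {A C D : T -> bool} {Y : T -> R}.
Hypotheses (mA : forall b, measurable (ev A b)) (mC : forall b, measurable (ev C b))
  (mD : forall b, measurable (ev D b)) (mY : measurable_fun setT Y)
  (iY : P.-integrable setT (EFin \o Y)).
Hypothesis factorization : forall (x y z : bool) (B : set R), measurable B ->
  pr P (ev A x `&` ev C y `&` ev D z `&` Y @^-1` B) =
    pr P (ev D z) * cprob P (ev C y) (ev D z) * cprob P (ev A x) (ev C y)
    * cprob P (Y @^-1` B) (ev A x `&` ev C y).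
Hypothesis positivity : forall x y z : bool, (0 < P (ev A x `&` ev C y `&` ev D z))%E.

Let mAC x y : measurable (ev A x `&` ev C y) := measurableI _ _ (mA x) (mC y).
Let mACD x y z : measurable (ev A x `&` ev C y `&` ev D z) :=
  measurableI _ _ (mAC x y) (mD z).

Lemma pr_ACD_gt0 x y z : 0 < pr P (ev A x `&` ev C y `&` ev D z).
Proof.
exact: pr_gt0_subset (mACD x y z) (mACD x y z) (@subset_refl _ _) (positivity x y z).
Qed.

Lemma pr_AC_gt0 x y : 0 < pr P (ev A x `&` ev C y).
Proof.
apply: pr_gt0_subset (mACD x y true) (mAC x y) _ (positivity x y true).
exact: subIsetl.
Qed.

Lemma pr_CD_gt0 y z : 0 < pr P (ev C y `&` ev D z).
Proof.
apply: pr_gt0_subset (mACD true y z) _ _ (positivity true y z).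
- exact: measurableI.
- by move=> w [[_ Cw] Dw].
Qed.

Lemma pr_C_gt0 y : 0 < pr P (ev C y).
Proof.
apply: pr_gt0_subset (mACD true y true) (mC y) _ (positivity true y true).
by move=> w [[_ Cw] _].
Qed.

Lemma pr_D_gt0 z : 0 < pr P (ev D z).
Proof.
apply: pr_gt0_subset (mACD true true z) (mD z) _ (positivity true true z).
by move=> w [_ Dw].
Qed.

Lemma pr_ACD x y z :
  pr P (ev A x `&` ev C y `&` ev D z) = pr P (ev C y `&` ev D z) * cprob P (ev A x) (ev C y).
Proof.
have := factorization x y z setT measurableT.
rewrite preimage_setT setIT => ->; rewrite /cprob setTI.
have pD_neq0 := lt0r_neq0 (pr_D_gt0 z); have pC_neq0 := lt0r_neq0 (pr_C_gt0 y).
have pAC_neq0 := lt0r_neq0 (pr_AC_gt0 x y).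
by field; rewrite pD_neq0 pC_neq0 pAC_neq0.
Qed.

Lemma condE_ACD x y z :
  condE P Y (ev A x `&` ev C y `&` ev D z) = condE P Y (ev A x `&` ev C y).
Proof.
apply: (condE_eq_of_law P mY iY (mACD x y z) (mAC x y) (pr_ACD_gt0 x y z) (pr_AC_gt0 x y)).
move=> B mB; have total := factorization x y z setT measurableT.
rewrite preimage_setT setIT [cprob _ setT _]/cprob setTI divff ?mulr1 in total; last first.
  exact/lt0r_neq0/pr_AC_gt0.
rewrite {1}/cprob setIC factorization // -total mulrC mulKf //.
exact/lt0r_neq0/pr_ACD_gt0.
Qed.

Lemma condE_AD x z : condE P Y (ev A x `&` ev D z) =
  wavg (pr P (ev C true `&` ev D z) * cprob P (ev A x) (ev C true))
       (pr P (ev C false `&` ev D z) * cprob P (ev A x) (ev C false))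
       (condE P Y (ev A x `&` ev C true)) (condE P Y (ev A x `&` ev C false)).
Proof.
by rewrite (condE_wavg P mY iY mC (measurableI _ _ (mA x) (mD z)));
  rewrite !(setIAC _ (ev D z)) ?pr_ACD_gt0 // !pr_ACD !condE_ACD.
Qed.

Lemma condE_AD_diff x : exists2 s, 0 < s &
  condE P Y (ev A x `&` ev D true) - condE P Y (ev A x `&` ev D false) =
  (condE P Y (ev A x `&` ev C true) - condE P Y (ev A x `&` ev C false)) *
  (s * joint_det P C D).
Proof.
have a_gt0 y : 0 < cprob P (ev A x) (ev C y) by rewrite divr_gt0 ?pr_AC_gt0 ?pr_C_gt0.
have w_gt0 y z : 0 < pr P (ev C y `&` ev D z) * cprob P (ev A x) (ev C y).
  by rewrite mulr_gt0 ?pr_CD_gt0.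
rewrite !condE_AD wavg_diff ?lt0r_neq0 ?addr_gt0 //.
set a := cprob P _ (ev C true); set b := cprob P _ (ev C false).
set den := (_ + _) * (_ + _).
have den_gt0 : 0 < den by rewrite mulr_gt0 ?addr_gt0 ?w_gt0.
exists (a * b / den); first exact: divr_gt0 (mulr_gt0 (a_gt0 _) (a_gt0 _)) den_gt0.
by congr (_ * _); rewrite /joint_det; ring.
Qed.

Lemma monotone_in_C_of_D :
  joint_det P C D != 0 -> monotone_in P Y A D -> monotone_in P Y A C.
Proof.
move=> det_neq0; rewrite !monotone_inE.
have [s1 s1_gt0 ->] := condE_AD_diff true.
have [s2 s2_gt0 ->] := condE_AD_diff false.
exact: same_sign_mul.
Qed.

End CommonCauseModel.

Theorem theorem6 (d : measure_display) (T : measurableType d) (R : realType)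
  (P : probability T R) (A C D : T -> bool) (Y : T -> R)
  (mA : forall b, measurable (ev A b))
  (mC : forall b, measurable (ev C b))
  (mD : forall b, measurable (ev D b))
  (mY : measurable_fun setT Y)
  (iY : P.-integrable setT (EFin \o Y))
  (* factorization p(A,C,D,Y) = p(D) p(C|D) p(A|C) p(Y|A,C) *)
  (fact : forall (x y z : bool) (B : set R), measurable B ->
     pr P (ev A x `&` ev C y `&` ev D z `&` Y @^-1` B) =
       pr P (ev D z) * cprob P (ev C y) (ev D z) * cprob P (ev A x) (ev C y)
       * cprob P (Y @^-1` B) (ev A x `&` ev C y))
  (* C and D are dependent *)
  (dep : ~ (forall y z : bool,
      pr P (ev C y `&` ev D z) = pr P (ev C y) * pr P (ev D z)))
  (* positivity *)
  (pos : forall x y z : bool, (0 < P (ev A x `&` ev C y `&` ev D z))%E) :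
  monotone_in P Y A D -> monotone_in P Y A C.
Proof.
apply: (monotone_in_C_of_D mA mC mD mY iY fact pos).
by apply/eqP => /(joint_det_eq0_indep P mC mD).
Qed.
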